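(* Let $P$ be a (possibly infinite) positive causal logic program with $n$ rules ($n\le\omega$, with $n=\omega$ if $P$ is infinite). Then (i) the least fixpoint $\mathrm{lfp}(T_P)$ of the direct consequences operator exists and is the $\le$-least causal model of $P$, and (ii) $\mathrm{lfp}(T_P)=T_P\!\uparrow\!\omega=T_P\!\uparrow\! n$.
   Context: Causal graphs over a label set $Lb$: graphs $\langle V,E\rangle$, $V\subseteq Lb$, $E\subseteq V\times V$, reflexively and transitively closed; $G\le G'$ iff $G\supseteq G'$ (as vertex and edge sets). $G*G'=(G\cup G')^*$, $G\cdot G'=(G\odot G')^*$ where $G\odot G'$ has vertex set $V\cup V'$ and edge set $E\cup E'\cup\{(x,y)\mid x\in V,y\in V'\}$, and $^*$ is reflexive–transitive closure. Causal values are down-sets (ideals) of $\langle$causal graphs$,\le\rangle$, ordered by $\subseteq$; $U*U'=U\cap U'$, $U+U'=U\cup U'$, $U\cdot U'={\downarrow}\{G\cdot G'\mid G\in U,G'\in U'\}$; arbitrary sums are unions and arbitrary products intersections; $0=\emptyset$, $1$ = the set of all causal graphs; a label $l$ stands for the value ${\downarrow}G_l$ where $G_l$ has the single vertex $l$ and single edge $(l,l)$. A causal logic program over signature $\langle At,Lb\rangle$ is a set of rules $t: H\leftarrow B_1,\dots,B_n$ with $t\in Lb\cup\{1\}$, $H\in At$, $B_i$ literals ($p$ or $\mathit{not}\ p$); it is positive if no default negation occurs. A causal interpretation is a map $I:At\to$ causal values; $I\le J$ iff $I(p)\le J(p)$ for all $p$. $I$ is a causal model of positive $P$ iff for every rule,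 $(I(B_1)*\dots*I(B_n))\cdot t\le I(H)$ (empty product $=1$). $T_P(I)(p)=\sum\{(I(B_1)*\dots*I(B_n))\cdot t\mid (t:p\leftarrow B_1,\dots,B_n)\in P\}$. $T_P\!\uparrow\!0$ maps every atom to $0$, $T_P\!\uparrow\!(k+1)=T_P(T_P\!\uparrow\!k)$, and $T_P\!\uparrow\!\omega(p)=\sum_{k<\omega}T_P\!\uparrow\!k(p)$. *)

From Stdlib Require Import List.
Set Implicit Arguments.

Section Causal.
Variables (Lb At : Type).

Record cgraph := CGraph {
  gV : Lb -> Prop;
  gE : Lb -> Lb -> Prop;
  gE_dom : forall x y, gE x y -> gV x /\ gV y;
  gE_refl : forall x, gV x -> gE x x;
  gE_trans : forall x y z, gE x y -> gE y z -> gE x z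
}.

(** G <= G' iff G ⊇ G' (as vertex and edge sets). *)
Definition gle (G G' : cgraph) : Prop :=
  (forall x, gV G' x -> gV G x) /\ (forall x y, gE G' x y -> gE G x y).

Inductive rtc (V : Lb -> Prop) (E : Lb -> Lb -> Prop) : Lb -> Lb -> Prop :=
| rtc_refl : forall x, V x -> rtc V E x x
| rtc_step : forall x y z, E x y -> rtc V E y z -> rtc V E x z.

Lemma rtc_dom (V : Lb -> Prop) (E : Lb -> Lb -> Prop)
  (H : forall x y, E x y -> V x /\ V y) :
  forall x y, rtc V E x y -> V x /\ V y.
Proof.
  induction 1 as [x Hx|x y z Hxy _ IH]; [tauto|].
  destruct (H _ _ Hxy); tauto.
Qed.

Lemma rtc_trans (V : Lb -> Prop) (E : Lb -> Lb -> Prop) :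
  forall x y z, rtc V E x y -> rtc V E y z -> rtc V E x z.
Proof.
  induction 1 as [x Hx|x y w Hxy _ IH]; intros; [assumption|].
  eapply rtc_step; eauto.
Qed.

Definition gclose (V : Lb -> Prop) (E : Lb -> Lb -> Prop)
  (H : forall x y, E x y -> V x /\ V y) : cgraph :=
  @CGraph V (rtc V E) (@rtc_dom V E H) (@rtc_refl V E) (@rtc_trans V E).

Definition odot_E (G G' : cgraph) (x y : Lb) : Prop :=
  gE G x y \/ gE G' x y \/ (gV G x /\ gV G' y).

Definition odot_V (G G' : cgraph) (x : Lb) : Prop := gV G x \/ gV G' x.

Lemma odot_dom (G G' : cgraph) :
  forall x y, odot_E G G' x y -> odot_V G G' x /\ odot_V G G' y.
Proof.
  unfold odot_E, odot_V; intros x y [H|[H|[H1 H2]]].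
  - destruct (gE_dom G _ _ H); tauto.
  - destruct (gE_dom G' _ _ H); tauto.
  - tauto.
Qed.

Definition gprod (G G' : cgraph) : cgraph :=
  @gclose (odot_V G G') (odot_E G G') (@odot_dom G G').

Lemma single_dom (l : Lb) :
  forall x y, (x = l /\ y = l) -> x = l /\ y = l.
Proof. tauto. Qed.

Definition glab (l : Lb) : cgraph.
Proof.
  refine (@CGraph (fun x => x = l) (fun x y => x = l /\ y = l) _ _ _).
  - tauto.
  - tauto.
  - intros x y z [H1 _] [_ H2]; tauto.
Defined.

(** Causal values: down-sets (ideals) of <causal graphs, <=>, ordered by ⊆. *)
Definition value := cgraph -> Prop.

Definition ideal (U : value) : Prop :=
  forall G G', gle G' G -> U G -> U G'.

Definition vle (U U' : value) : Prop := forall G, U G -> U' G.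

Definition vzero : value := fun _ => False.
Definition vone : value := fun _ => True.
Definition vmeet (U U' : value) : value := fun G => U G /\ U' G.
Definition vjoin (U U' : value) : value := fun G => U G \/ U' G.
Definition vprod (U U' : value) : value :=
  fun H => exists G G', U G /\ U' G' /\ gle H (gprod G G').
Definition vlab (l : Lb) : value := fun H => gle H (glab l).

(** Rule labels: t ∈ Lb ∪ {1}; None stands for 1. *)
Definition vterm (t : option Lb) : value :=
  match t with None => vone | Some l => vlab l end.

(** Positive causal rules  t : H <- B_1, ..., B_n  (bodies contain only atoms,
    i.e. no default negation). *)
Record rule := Rule { rlab : option Lb; rhead : At; rbody : list At }.

Definition program := rule -> Prop.

Definition interp := At -> value.
Definition is_interp (I : interp) : Prop := forall p, ideal (I p).
Definition ile (I J : interp) : Prop := forall p, vle (I p) (J p).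

Definition body_val (I : interp) (B : list At) : value :=
  fold_right (fun p acc => vmeet (I p) acc) vone B.

Definition rule_val (I : interp) (r : rule) : value :=
  vprod (body_val I (rbody r)) (vterm (rlab r)).

Definition is_model (P : program) (I : interp) : Prop :=
  forall r, P r -> vle (rule_val I r) (I (rhead r)).

Definition TP (P : program) (I : interp) : interp :=
  fun p G => exists r, P r /\ rhead r = p /\ rule_val I r G.

Fixpoint TP_up (P : program) (k : nat) : interp :=
  match k with
  | 0 => fun _ => vzero
  | S k => TP P (TP_up P k)
  end.

Definition TP_omega (P : program) : interp :=
  fun p G => exists k, TP_up P k p G.

Definition is_lfp (P : program) (I : interp) : Prop :=
  is_interp I /\ TP P I = I /\
  forall J, is_interp J -> TP P J = J -> ile I J.

Definition is_least_model (P : program) (I : interp) : Prop :=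
  is_interp I /\ is_model P I /\
  forall J, is_interp J -> is_model P J -> ile I J.

Definition countable_program (P : program) : Prop :=
  exists f : nat -> rule, forall r, P r -> exists k, f k = r.

Definition has_n_rules (P : program) (n : nat) : Prop :=
  exists l : list rule, NoDup l /\ (forall r, P r <-> In r l) /\ length l = n.

End Causal.

(* T_P is monotone and, since rule bodies are finite, continuous along chains,
   so T_P^ω is a fixpoint; it lies below every model because fixpoints are
   models and models are closed under T_P.
   For a program with n rules, consider a derivation of a graph in T_P^k.  The
   graph produced by a rule application lies below (contains) the graph of its
   body, hence below the graph of every node beneath it on the same branch.  If
   a rule occurs twice on a branch, the upper occurrence can thus be replaced by
   the subtree of the lower one, values being down-closed.  Derivations without
   repetitions along branches have depth at most n, so T_P^k ⊆ T_P^n. *)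
From Stdlib Require Import List Lia Classical FunctionalExtensionality PropExtensionality.
Import ListNotations.

Set Implicit Arguments.
Unset Strict Implicit.

Section Causal.
Variables Lb At : Type.
Implicit Types (G H : cgraph Lb) (I J : interp Lb At) (r : rule Lb At)
  (A : list (rule Lb At)) (B : list At).

Lemma gle_trans G1 G2 G3 : gle G1 G2 -> gle G2 G3 -> gle G1 G3.
Proof. unfold gle; firstorder. Qed.

Lemma gle_gprod_l G G' : gle (gprod G G') G.
Proof.
  split; simpl.
  - intros x Hx; now left.
  - intros x y Hxy; eapply rtc_step; [left; exact Hxy|].
    apply rtc_refl; left; apply (gE_dom _ _ _ Hxy).
Qed.

Lemma body_val_cons I p B G :
  body_val I (p :: B) G <-> I p G /\ body_val I B G.
Proof. reflexivity. Qed.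

Lemma body_val_mono I J B G : ile I J -> body_val I B G -> body_val J B G.
Proof.
  intros HIJ; induction B as [|p B IH]; [easy|].
  rewrite !body_val_cons; intros [Hp HB]; split; [apply HIJ|]; auto.
Qed.

Lemma body_val_or I J (E : Prop) B G :
  (forall p, I p G -> J p G \/ E) -> body_val I B G -> body_val J B G \/ E.
Proof.
  intros HIJ; induction B as [|p B IH]; [now left|].
  rewrite !body_val_cons; intros [Hp HB].
  destruct (HIJ p Hp), (IH HB); tauto.
Qed.

Definition isup (F : nat -> interp Lb At) : interp Lb At :=
  fun p G => exists k, F k p G.

Definition chain (F : nat -> interp Lb At) : Prop := forall k, ile (F k) (F (S k)).

Lemma chain_le F : chain F -> forall k k', k <= k' -> ile (F k) (F k').
Proof.
  intros HF k k' Hk; induction Hk as [|k' _ IH]; intros p G HG; [easy|].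
  apply HF, IH, HG.
Qed.

Lemma body_val_isup F B G :
  chain F -> body_val (isup F) B G -> exists k, body_val (F k) B G.
Proof.
  intros HF; induction B as [|p B IH]; [now exists 0|].
  rewrite body_val_cons; intros [[k1 H1] HB].
  destruct (IH HB) as [k2 H2]; exists (max k1 k2); split.
  - apply (chain_le HF (PeanoNat.Nat.le_max_l k1 k2)), H1.
  - eapply body_val_mono; [apply (chain_le HF (PeanoNat.Nat.le_max_r k1 k2))|exact H2].
Qed.

Lemma rule_val_mono I J r : ile I J -> vle (rule_val I r) (rule_val J r).
Proof.
  intros HIJ H (G1 & G2 & H1 & H2 & H3); exists G1, G2.
  eauto using body_val_mono.
Qed.

Lemma rule_val_ideal I r : ideal (rule_val I r).
Proof.
  intros G H HHG (G1 & G2 & H1 & H2 & H3); exists G1, G2.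
  eauto using gle_trans.
Qed.

Lemma rule_val_body I r H :
  rule_val I r H ->
  exists G, gle H G /\ body_val I (rbody r) G /\
            forall J, body_val J (rbody r) G -> rule_val J r H.
Proof.
  intros (G1 & G2 & H1 & H2 & H3); exists G1; split; [|split; [exact H1|]].
  - eapply gle_trans; [exact H3|apply gle_gprod_l].
  - intros J HJ; exists G1, G2; auto.
Qed.

Lemma interp_eq I J : ile I J -> ile J I -> I = J.
Proof.
  intros HIJ HJI; apply functional_extensionality; intro p.
  apply functional_extensionality; intro G.
  apply propositional_extensionality; split; [apply HIJ|apply HJI].
Qed.

Variable P : program Lb At.

Lemma TP_mono I J : ile I J -> ile (TP P I) (TP P J).
Proof.
  intros HIJ p G (r & Pr & Hh & Hr); exists r; repeat split; auto.
  eapply rule_val_mono; eauto.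
Qed.

Lemma TP_interp I : is_interp (TP P I).
Proof.
  intros p G H HHG (r & Pr & Hh & Hr); exists r; repeat split; auto.
  eapply rule_val_ideal; eauto.
Qed.

Lemma TP_up_interp k : is_interp (TP_up P k).
Proof. destruct k; [intros p G H _ []|apply TP_interp]. Qed.

Lemma TP_up_chain : chain (TP_up P).
Proof.
  intro k; induction k as [|k IH]; [intros p G []|].
  apply TP_mono, IH.
Qed.

Lemma model_TP_le J : is_model P J -> ile (TP P J) J.
Proof. intros HJ p G (r & Pr & <- & Hr); exact (HJ r Pr G Hr). Qed.

Lemma fixpoint_model J : TP P J = J -> is_model P J.
Proof. intros HJ r Pr G HG; rewrite <- HJ; exists r; auto. Qed.

Lemma TP_up_le_model J k : is_model P J -> ile (TP_up P k) J.
Proof.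
  intros HJ; induction k as [|k IH]; [intros p G []|].
  intros p G HG; apply (model_TP_le HJ), (TP_mono IH), HG.
Qed.

Lemma TP_omega_interp : is_interp (TP_omega P).
Proof.
  intros p G H HHG [k Hk]; exists k; eapply TP_up_interp; eauto.
Qed.

Lemma TP_omega_fixpoint : TP P (TP_omega P) = TP_omega P.
Proof.
  apply interp_eq.
  - intros p H (r & Pr & Hh & Hr).
    destruct (rule_val_body Hr) as (G & _ & HB & Hrule).
    destruct (body_val_isup TP_up_chain HB) as [k Hk].
    exists (S k), r; auto.
  - intros p G [[|k] Hk]; [destruct Hk|].
    eapply TP_mono; [|exact Hk]; intros q H HH; exists k; exact HH.
Qed.

Lemma TP_omega_lfp : is_lfp P (TP_omega P).
Proof.
  split; [apply TP_omega_interp|split; [apply TP_omega_fixpoint|]].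
  intros J _ HJ p G [k Hk]; eapply TP_up_le_model; [apply fixpoint_model|]; eauto.
Qed.

Lemma TP_omega_least_model : is_least_model P (TP_omega P).
Proof.
  split; [apply TP_omega_interp|split].
  - apply fixpoint_model, TP_omega_fixpoint.
  - intros J _ HJ p G [k Hk]; eapply TP_up_le_model; eauto.
Qed.

Lemma lfp_unique I J : is_lfp P I -> is_lfp P J -> I = J.
Proof.
  intros (HI & HIf & HIl) (HJ & HJf & HJl); apply interp_eq; auto.
Qed.

(* Derivations of depth [m] in which no rule is used twice along a branch;
   [A] lists the rules already used on the path from the root. *)
Fixpoint TP_fresh A (m : nat) : interp Lb At :=
  match m with
  | 0 => fun _ _ => False
  | S m => fun p G => exists r, P r /\ ~ In r A /\ rhead r = p /\
                               rule_val (TP_fresh (r :: A) m) r G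
  end.

Lemma TP_fresh_ideal A m p : ideal (TP_fresh A m p).
Proof.
  destruct m as [|m]; intros G H HHG; [easy|].
  intros (r & Pr & Hr & Hh & Hv); exists r; repeat split; auto.
  eapply rule_val_ideal; eauto.
Qed.

Lemma TP_fresh_chain A : chain (TP_fresh A).
Proof.
  intro m; revert A; induction m as [|m IH]; intros A p G; [easy|].
  intros (r & Pr & Hr & Hh & Hv); exists r; repeat split; auto.
  eapply rule_val_mono; [apply IH|exact Hv].
Qed.

Lemma TP_fresh_antitone m A A' : incl A A' -> ile (TP_fresh A' m) (TP_fresh A m).
Proof.
  revert A A'; induction m as [|m IH]; intros A A' HA p G; [easy|].
  intros (r & Pr & Hr & Hh & Hv); exists r; repeat split; auto.
  eapply rule_val_mono; [apply IH, incl_cons; [apply in_eq|apply incl_tl, HA]|exact Hv].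
Qed.

Lemma TP_fresh_TP_up m A : ile (TP_fresh A m) (TP_up P m).
Proof.
  revert A; induction m as [|m IH]; intros A p G; [easy|].
  intros (r & Pr & Hr & Hh & Hv); exists r; repeat split; auto.
  eapply rule_val_mono; [apply IH|exact Hv].
Qed.

(* Every branch of a fresh derivation consists of distinct rules of [l]. *)
Lemma TP_fresh_depth (l : list (rule Lb At)) :
  (forall r, P r -> In r l) ->
  forall m A, NoDup A -> incl A l ->
    ile (TP_fresh A m) (TP_fresh A (length l - length A)).
Proof.
  intros Hl m; induction m as [|m IH]; intros A HA HAl p G; [easy|].
  intros (r & Pr & Hr & Hh & Hv).
  assert (HrA : NoDup (r :: A)) by (constructor; auto).
  assert (HrAl : incl (r :: A) l) by (apply incl_cons; auto).
  replace (length l - length A) with (S (length l - length (r :: A))).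
  - exists r; repeat split; auto.
    eapply rule_val_mono; [apply IH; assumption|exact Hv].
  - pose proof (NoDup_incl_length HrA HrAl); simpl in *; lia.
Qed.

(* [H] is freshly derived for the head of some rule [r] on the path [A],
   avoiding only the rules above [r]. *)
Fixpoint by_ancestor A H : Prop :=
  match A with
  | [] => False
  | r :: A' => isup (TP_fresh A') (rhead r) H \/ by_ancestor A' H
  end.

Lemma by_ancestor_ideal A G H : gle H G -> by_ancestor A G -> by_ancestor A H.
Proof.
  intros HHG; induction A as [|r A IH]; [easy|].
  intros [[m Hm]|HA]; [left; exists m|right; auto].
  eapply TP_fresh_ideal; eauto.
Qed.

Lemma by_ancestor_rule A r m H :
  P r -> In r A -> rule_val (TP_fresh (r :: A) m) r H -> by_ancestor A H.
Proof.
  intro Pr; induction A as [|r' A IH]; intros HrA Hv; [easy|].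
  destruct (classic (In r A)) as [HrA'|HrA'].
  - right; apply IH; [exact HrA'|].
    eapply rule_val_mono; [|exact Hv].
    apply TP_fresh_antitone; intros x [<-|Hx]; [apply in_eq|].
    right; right; exact Hx.
  - destruct HrA as [->|]; [|contradiction].
    left; exists (S m), r; repeat split; auto.
    eapply rule_val_mono; [|exact Hv].
    apply TP_fresh_antitone; intros x Hx; right; exact Hx.
Qed.

Lemma TP_up_fresh k : forall A p H,
  TP_up P k p H -> isup (TP_fresh A) p H \/ by_ancestor A H.
Proof.
  induction k as [|k IH]; intros A p H; [easy|].
  intros (r & Pr & <- & Hv).
  destruct (rule_val_body Hv) as (G & HHG & HB & Hrule).
  destruct (body_val_or (fun q => IH (r :: A) q G) HB) as [Hfresh|[Hanc|Hanc]].
  - destruct (body_val_isup (TP_fresh_chain (A := r :: A)) Hfresh) as [m Hm].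
    destruct (classic (In r A)) as [HrA|HrA].
    + right; exact (by_ancestor_rule Pr HrA (Hrule _ Hm)).
    + left; exists (S m), r; auto.
  - left; destruct Hanc as [m Hm]; exists m; eapply TP_fresh_ideal; eauto.
  - right; eapply by_ancestor_ideal; eauto.
Qed.

Lemma TP_up_finite n : has_n_rules P n -> TP_up P n = TP_omega P.
Proof.
  intros (l & _ & Hl & <-); apply interp_eq; [intros p G HG; exists (length l); exact HG|].
  intros p G [k Hk].
  destruct (TP_up_fresh [] Hk) as [[m Hm]|[]].
  apply (TP_fresh_TP_up (A := [])).
  apply (TP_fresh_depth (l := l)) in Hm; [|apply Hl|constructor|intros x []].
  rewrite PeanoNat.Nat.sub_0_r in Hm; exact Hm.
Qed.

End Causal.

Theorem theorem2 (Lb At : Type) (P : program Lb At)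
  (Hcount : countable_program P) :
  (exists I, is_lfp P I /\ is_least_model P I) /\
  (forall I, is_lfp P I ->
     TP_omega P = I /\
     (forall n : nat, has_n_rules P n -> TP_up P n = I)).
Proof.
  split.
  - exists (TP_omega P); split; [apply TP_omega_lfp|apply TP_omega_least_model].
  - intros I HI.
    assert (Homega : TP_omega P = I) by exact (lfp_unique (TP_omega_lfp P) HI).
    split; [exact Homega|].
    intros n Hn; rewrite <- Homega; exact (TP_up_finite Hn).
Qed.
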